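(* Let $m,g,H,\mathrm{C_dA},\rho,P_0>0$, $\mathrm{C_{rr}}\ge 0$ and $0\le\lambda<1$ be constants. For $D>0$, set $$L(D)=\sqrt{H^2+D^2},\qquad a(D)=m\,g\,(H+\mathrm{C_{rr}}D),\qquad b=\tfrac12\mathrm{C_dA}\,\rho,\qquad c=(1-\lambda)P_0,$$ and let $V(D)$ be the unique positive solution of $$a(D)\,\frac{V}{L(D)}+b\,V^3=c.$$ Define $T(D)=L(D)/V(D)$. Then $$\frac{\mathrm dT}{\mathrm dD}>0\quad\text{for all } D>0.$$ That is, among straight-line ascents with fixed height gain $H$, the ascent time strictly decreases as the horizontal distance $D$ decreases (the climb gets steeper). *)

From Stdlib Require Import Reals ClassicalEpsilon.
From Coquelicot Require Import Coquelicot.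
Open Scope R_scope.

Definition Lfun (H D : R) : R := sqrt (H ^ 2 + D ^ 2).

Definition afun (m g H Crr D : R) : R := m * g * (H + Crr * D).

Definition bconst (CdA rho : R) : R := / 2 * CdA * rho.

Definition cconst (lam P0 : R) : R := (1 - lam) * P0.

(* V(D): "the" positive solution V of a(D) V / L(D) + b V^3 = c,
   chosen by Hilbert's epsilon (it is unique under the hypotheses). *)
Definition Vfun (m g H Crr CdA rho lam P0 D : R) : R :=
  epsilon (inhabits 0) (fun V => 0 < V /\
    afun m g H Crr D * V / Lfun H D + bconst CdA rho * V ^ 3 = cconst lam P0).

Definition Tfun (m g H Crr CdA rho lam P0 D : R) : R :=
  Lfun H D / Vfun m g H Crr CdA rho lam P0 D.

(* Dividing the defining equation of V by V gives  b V^2 - c / V = - a(D) / L(D).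
   The left side is a strictly increasing bijection of (0, oo) onto R, so V(D)
   is its inverse evaluated at - a(D) / L(D), which is differentiable by the
   inverse function theorem.  Differentiating T = L / V and eliminating c with
   the equation of V, the numerator of T' collapses to
   3 b D V^2 / L + m g Crr, which is positive. *)
From Stdlib Require Import Reals Lra Ranalysis5 ClassicalEpsilon.
From Coquelicot Require Import Coquelicot.
Open Scope R_scope.

Definition balance (b c V : R) : R := b * V ^ 2 - c / V.

Definition balance_slope (b c V : R) : R := 2 * b * V + c / V ^ 2.

Definition balance_inv (b c y : R) : R :=
  epsilon (inhabits 0) (fun V => 0 < V /\ balance b c V = y).

Section Balance.

Variables b c : R.
Hypothesis hb : 0 < b.
Hypothesis hc : 0 < c.

Lemma balance_increasing x y : 0 < x -> x < y -> balance b c x < balance b c y.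
Proof.
  intros hx hxy; unfold balance.
  assert (c / y < c / x).
  { apply Rmult_lt_compat_l; [lra|]. apply Rinv_lt_contravar; nra. }
  assert (b * x ^ 2 < b * y ^ 2) by (apply Rmult_lt_compat_l; nra).
  lra.
Qed.

Lemma balance_inj x y :
  0 < x -> 0 < y -> balance b c x = balance b c y -> x = y.
Proof.
  intros hx hy e.
  destruct (Rtotal_order x y) as [h | [h | h]]; auto;
    apply balance_increasing in h; lra.
Qed.

Lemma balance_derive V :
  0 < V -> derivable_pt_lim (balance b c) V (balance_slope b c V).
Proof.
  intro hV; apply is_derive_Reals; unfold balance, balance_slope.
  auto_derive; [lra | field; lra].
Qed.

Lemma balance_slope_pos V : 0 < V -> 0 < balance_slope b c V.
Proof.
  intro hV; unfold balance_slope.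
  assert (0 < c / V ^ 2) by (apply Rdiv_lt_0_compat; [lra | apply pow_lt; lra]).
  nra.
Qed.

Lemma balance_continuous V : 0 < V -> continuity_pt (balance b c) V.
Proof.
  intro hV; apply derivable_continuous_pt.
  exists (balance_slope b c V); exact (balance_derive V hV).
Qed.

Lemma balance_below y : exists V, 0 < V /\ balance b c V < y.
Proof.
  pose proof (Rabs_pos y); pose proof (Rabs_maj2 y).
  exists (c / (Rabs y + b + c)).
  assert (hV1 : c / (Rabs y + b + c) < 1) by (apply Rlt_div_l; lra).
  assert (0 < c / (Rabs y + b + c)) by (apply Rdiv_lt_0_compat; lra).
  split; [lra|]; unfold balance.
  replace (c / (c / (Rabs y + b + c))) with (Rabs y + b + c) by (field; lra).
  assert (b * (c / (Rabs y + b + c)) ^ 2 < b * 1) by (apply Rmult_lt_compat_l; nra).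
  lra.
Qed.

Lemma balance_above y : exists V, 0 < V /\ y < balance b c V.
Proof.
  pose proof (Rabs_pos y); pose proof (Rle_abs y).
  set (V := 1 + (Rabs y + c) / b).
  assert (hq : 0 <= (Rabs y + c) / b) by (apply Rdiv_le_0_compat; lra).
  assert (hbV : b * V = b + Rabs y + c) by (unfold V; field; lra).
  assert (c / V <= c).
  { apply Rle_div_l; [unfold V; lra | nra]. }
  exists V; split; [unfold V; lra|]; unfold balance.
  assert (b * V <= b * V ^ 2) by (unfold V in *; nra).
  lra.
Qed.

Lemma balance_surj y : exists V, 0 < V /\ balance b c V = y.
Proof.
  destruct (balance_below y) as [lo [hlo elo]].
  destruct (balance_above y) as [hi [hhi ehi]].
  assert (hlohi : lo < hi).
  { destruct (Rlt_or_le lo hi) as [h | [h | h]]; auto.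
    - apply balance_increasing in h; lra.
    - subst; lra. }
  destruct (IVT_interv (fun V => balance b c V - y) lo hi) as [V [hV eV]];
    try lra.
  - intros V hV; apply continuity_pt_minus;
      [apply balance_continuous; lra | apply continuity_pt_const; easy].
  - exists V; split; lra.
Qed.

Lemma balance_inv_spec y : 0 < balance_inv b c y /\ balance b c (balance_inv b c y) = y.
Proof. unfold balance_inv; apply epsilon_spec, balance_surj. Qed.

Lemma balance_inv_le x y : x <= y -> balance_inv b c x <= balance_inv b c y.
Proof.
  intro h.
  destruct (balance_inv_spec x) as [hx ex], (balance_inv_spec y) as [hy ey].
  destruct (Rle_or_lt (balance_inv b c x) (balance_inv b c y)) as [h' | h']; auto.
  apply balance_increasing in h'; lra.
Qed.

Lemma balance_inv_continuous y : continuity_pt (balance_inv b c) y.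
Proof.
  destruct (balance_inv_spec (y - 1)) as [hlo elo].
  destruct (balance_inv_spec (y + 1)) as [hhi ehi].
  apply (continuity_pt_recip_interv (balance b c) (balance_inv b c)
           (balance_inv b c (y - 1)) (balance_inv b c (y + 1))).
  - destruct (Rle_lt_or_eq_dec _ _ (balance_inv_le (y - 1) (y + 1) ltac:(lra)))
      as [h | h]; [exact h|].
    rewrite h in elo; lra.
  - intros u v hu huv hv; apply balance_increasing; lra.
  - intros u _ _; apply balance_inv_spec.
  - intros u h1 h2; rewrite elo in h1; rewrite ehi in h2.
    split; apply balance_inv_le; lra.
  - intros V hV; apply balance_continuous; lra.
  - rewrite elo, ehi; lra.
Qed.

Lemma is_derive_balance_inv y :
  is_derive (balance_inv b c) y (/ balance_slope b c (balance_inv b c y)).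
Proof.
  destruct (balance_inv_spec (y - 1)) as [hlo _].
  destruct (balance_inv_spec y) as [hV _].
  assert (hI : balance_inv b c (y - 1) <= balance_inv b c y <= balance_inv b c (y + 1))
    by (split; apply balance_inv_le; lra).
  assert (hder : forall V, balance_inv b c (y - 1) <= V <= balance_inv b c (y + 1) ->
                      derivable_pt (balance b c) V).
  { intros V hV'; exists (balance_slope b c V); apply balance_derive; lra. }
  apply is_derive_Reals.
  pose proof (derivable_pt_lim_recip_interv (balance b c) (balance_inv b c)
                (y - 1) (y + 1) y hder (balance_inv_continuous y)
                ltac:(lra) ltac:(lra) hI) as K.
  rewrite (derive_pt_eq_0 _ _ _ _ (balance_derive _ hV)) in K.
  rewrite <- (Rmult_1_l (/ _)).
  apply K; [intros u _; apply balance_inv_spec |].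
  apply Rgt_not_eq, balance_slope_pos, hV.
Qed.

End Balance.

Lemma speed_equation_iff (a b c L V : R) :
  0 < L -> 0 < V -> a * V / L + b * V ^ 3 = c <-> balance b c V = - a / L.
Proof.
  intros hL hV; unfold balance; split; intro e.
  - rewrite <- e; field; lra.
  - replace c with (V * (c / V)) by (field; lra).
    replace (c / V) with (b * V ^ 2 + a / L) by lra.
    field; lra.
Qed.

(* [T' = (L' V - L V') / V^2] with [c] eliminated through the equation of [V]. *)
Lemma ascent_slope_identity (a b c k D L V : R) :
  0 < L -> 0 < V -> 0 < balance_slope b c V -> a * V / L + b * V ^ 3 = c ->
  (D / L * V - L * ((a * (D / L) - k * L) / L ^ 2 / balance_slope b c V)) / V ^ 2
  = (3 * b * D * V ^ 2 / L + k) / (balance_slope b c V * V ^ 2).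
Proof.
  intros hL hV hp e.
  assert (eDp : D / L * V * balance_slope b c V = 3 * b * D * V ^ 2 / L + a * D / L ^ 2).
  { unfold balance_slope; rewrite <- e; field; lra. }
  transitivity ((D / L * V * balance_slope b c V - (a * (D / L) - k * L) / L)
                / (balance_slope b c V * V ^ 2)); [field; lra|].
  rewrite eDp; field; lra.
Qed.

Section Ascent.

Variables m g H Crr CdA rho lam P0 : R.
Hypothesis hH : 0 < H.
Hypothesis hb : 0 < bconst CdA rho.
Hypothesis hc : 0 < cconst lam P0.

Local Notation b := (bconst CdA rho).
Local Notation c := (cconst lam P0).
Local Notation L := (Lfun H).
Local Notation a := (afun m g H Crr).
Local Notation V := (Vfun m g H Crr CdA rho lam P0).

Lemma Lfun_pos D : 0 < L D.
Proof. apply sqrt_lt_R0; nra. Qed.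

Lemma is_derive_Lfun D : is_derive L D (D / L D).
Proof.
  pose proof (Lfun_pos D) as hL; unfold Lfun in *.
  auto_derive; [nra|].
  replace (H * (H * 1) + D * (D * 1)) with (H ^ 2 + D ^ 2) by ring.
  field; lra.
Qed.

Lemma is_derive_afun D : is_derive a D (m * g * Crr).
Proof. unfold afun; auto_derive; [easy | ring]. Qed.

Lemma Vfun_eq_balance_inv D : V D = balance_inv b c (- a D / L D).
Proof.
  destruct (balance_inv_spec b c hb hc (- a D / L D)) as [hV eV].
  pose proof (Lfun_pos D) as hL.
  unfold Vfun; fold (bconst CdA rho) (cconst lam P0).
  destruct (epsilon_spec (inhabits 0) (fun v => 0 < v /\
              a D * v / L D + b * v ^ 3 = c)) as [hV' eV'].
  { exists (balance_inv b c (- a D / L D)); split; [exact hV|].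
    apply speed_equation_iff; assumption. }
  apply (balance_inj b c hb hc); [exact hV' | exact hV |].
  rewrite eV; apply speed_equation_iff; assumption.
Qed.

Lemma Vfun_spec D : 0 < V D /\ a D * V D / L D + b * V D ^ 3 = c.
Proof.
  rewrite Vfun_eq_balance_inv.
  destruct (balance_inv_spec b c hb hc (- a D / L D)) as [hV eV].
  split; [exact hV|]; apply speed_equation_iff; [apply Lfun_pos | exact hV | exact eV].
Qed.

Lemma is_derive_Vfun D :
  is_derive V D ((a D * (D / L D) - m * g * Crr * L D) / L D ^ 2
                 / balance_slope b c (V D)).
Proof.
  pose proof (Lfun_pos D) as hL.
  apply (is_derive_ext (fun x => balance_inv b c (- a x / L x))).
  { intro x; symmetry; apply Vfun_eq_balance_inv. }
  rewrite Vfun_eq_balance_inv.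
  replace (_ / _ / _) with
    (scal (((- (m * g * Crr)) * L D - (- a D) * (D / L D)) / L D ^ 2)
          (/ balance_slope b c (balance_inv b c (- a D / L D))))
    by (unfold scal; simpl; unfold mult; simpl; field;
        split; [lra | apply Rgt_not_eq, balance_slope_pos, balance_inv_spec; assumption]).
  apply (is_derive_comp (balance_inv b c) (fun x => - a x / L x));
    [apply is_derive_balance_inv; assumption |].
  apply (is_derive_div (fun x => - a x) L);
    [apply (is_derive_opp a), is_derive_afun | apply is_derive_Lfun | lra].
Qed.

Lemma is_derive_Tfun D :
  is_derive (Tfun m g H Crr CdA rho lam P0) D
    ((3 * b * D * V D ^ 2 / L D + m * g * Crr) / (balance_slope b c (V D) * V D ^ 2)).
Proof.
  destruct (Vfun_spec D) as [hV eV].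
  pose proof (Lfun_pos D) as hL.
  pose proof (balance_slope_pos b c hb hc _ hV) as hp.
  rewrite <- (ascent_slope_identity (a D) b c) by assumption.
  apply is_derive_div; [apply is_derive_Lfun | apply is_derive_Vfun | lra].
Qed.

End Ascent.

Theorem lemma2 (m g H CdA rho P0 Crr lam : R)
  (hm : 0 < m) (hg : 0 < g) (hH : 0 < H) (hCdA : 0 < CdA) (hrho : 0 < rho)
  (hP0 : 0 < P0) (hCrr : 0 <= Crr) (hlam0 : 0 <= lam) (hlam1 : lam < 1) :
  forall D : R, 0 < D ->
    exists l : R, is_derive (Tfun m g H Crr CdA rho lam P0) D l /\ 0 < l.
Proof.
  intros D hD.
  assert (hb : 0 < bconst CdA rho) by (unfold bconst; nra).
  assert (hc : 0 < cconst lam P0) by (unfold cconst; nra).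
  eexists; split; [apply is_derive_Tfun; assumption |].
  set (V := Vfun m g H Crr CdA rho lam P0 D).
  destruct (Vfun_spec m g H Crr CdA rho lam P0 hH hb hc D) as [hV _]; fold V in hV.
  assert (hV2 : 0 < V ^ 2) by (apply pow_lt; exact hV).
  pose proof (Lfun_pos H hH D) as hL.
  pose proof (balance_slope_pos _ _ hb hc _ hV) as hp.
  apply Rdiv_lt_0_compat; [| apply Rmult_lt_0_compat; assumption].
  apply Rplus_lt_le_0_compat; [| apply Rmult_le_pos; nra].
  apply Rdiv_lt_0_compat; [| exact hL].
  assert (0 < bconst CdA rho * D) by nra.
  nra.
Qed.
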